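(* Let $P_\infty=u_1,u_2,\dots$ be the one-way infinite path, with initial configuration $c_0(u_1)=1$ and $c_0(u_i)=2$ for $i\geq2$ (each vertex gets as many chips as its degree). Then for every $k\geq0$: the sequence $(c_{2k}(u_i))_{i\geq1}$ is the word consisting of $k$ copies of the block $1,3$, followed by $1$, followed by $2,2,2,\dots$; and the sequence $(c_{2k+1}(u_i))_{i\ge1}$ is $2$, followed by $k$ copies of the block $1,3$, followed by $1$, followed by $2,2,2,\dots$.
   Context: Diffusion process: for a configuration $c_t$, $c_{t+1}(w)=c_t(w)-|\{x\in N(w): c_t(w)>c_t(x)\}|+|\{x\in N(w): c_t(w)<c_t(x)\}|$ for all vertices $w$ simultaneously (every vertex sends one chip to each neighbour with strictly fewer chips). *)

From Stdlib Require Import ZArith List Lia.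
Open Scope Z_scope.

(* Vertices of the one-way infinite path P_oo = u_1, u_2, ... are encoded
   by nat: vertex i : nat stands for u_(i+1). *)

Definition path_nbrs (i : nat) : list nat :=
  match i with
  | O => (1%nat :: nil)
  | S j => (j :: S (S j) :: nil)
  end.

Definition config := nat -> Z.

Definition diffusion_step (N : nat -> list nat) (c : config) : config :=
  fun w =>
    c w
    - Z.of_nat (length (filter (fun x => Z.ltb (c x) (c w)) (N w)))
    + Z.of_nat (length (filter (fun x => Z.ltb (c w) (c x)) (N w))).

Fixpoint diffusion (N : nat -> list nat) (c0 : config) (t : nat) : config :=
  match t with
  | O => c0
  | S t' => diffusion_step N (diffusion N c0 t')
  end.

Definition c0_path : config := fun i => match i with O => 1 | _ => 2 end.

(* The word (1,3)^k 1 2 2 2 ..., indexed from 0. *)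
Definition even_word (k : nat) : config :=
  fun i =>
    if Nat.ltb i (2 * k) then (if Nat.even i then 1 else 3)
    else if Nat.eqb i (2 * k) then 1
    else 2.

Definition odd_word (k : nat) : config :=
  fun i => match i with O => 2 | S j => even_word k j end.

From Stdlib Require Import ZArith List Lia.

(* One diffusion step turns the word (1,3)^k 1 2 2 ... into 2 (1,3)^k 1 2 2 ...,
   and that word into (1,3)^(k+1) 1 2 2 ...: at each vertex this is a finite
   check of the local rule, depending only on the parity of the vertex and on
   its position relative to the block (1,3)^k.  As c_0 is the first word for
   k = 0, induction on k gives the theorem. *)

Lemma diffusion_step_ext (N : nat -> list nat) (c d : config) :
  (forall x, c x = d x) -> forall w, diffusion_step N c w = diffusion_step N d w.
Proof.
  intros Hcd w. unfold diffusion_step. rewrite !Hcd.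
  rewrite (filter_ext (fun x => c x <? d w) (fun x => d x <? d w)),
          (filter_ext (fun x => d w <? c x) (fun x => d w <? d x));
    [reflexivity | intros x; now rewrite Hcd ..].
Qed.

Lemma even_witness (x : nat) :
  exists m, if Nat.even x then x = (2 * m)%nat else x = (2 * m + 1)%nat.
Proof.
  destruct (Nat.Even_or_Odd x) as [[m Hm] | [m Hm]]; exists m.
  - now rewrite (proj2 (Nat.even_spec x) (ex_intro _ m Hm)).
  - rewrite <- Nat.negb_odd, (proj2 (Nat.odd_spec x) (ex_intro _ m Hm)). exact Hm.
Qed.

Ltac path_word_cases :=
  repeat match goal with
  | |- context [Nat.even ?x] =>
      destruct (even_witness x) as [? ?]; destruct (Nat.even x)
  | |- context [Nat.ltb ?a ?b] => destruct (Nat.ltb_spec a b)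
  | |- context [Nat.eqb ?a ?b] => destruct (Nat.eqb_spec a b)
  end; simpl; lia.

Lemma diffusion_step_even_word (k i : nat) :
  diffusion_step path_nbrs (even_word k) i = odd_word k i.
Proof.
  destruct i as [| [| j]]; unfold diffusion_step, odd_word, even_word;
    simpl path_nbrs; cbn [filter]; path_word_cases.
Qed.

Lemma diffusion_step_odd_word (k i : nat) :
  diffusion_step path_nbrs (odd_word k) i = even_word (S k) i.
Proof.
  destruct i as [| [| [| j]]]; unfold diffusion_step, odd_word, even_word;
    simpl path_nbrs; cbn [filter]; path_word_cases.
Qed.

Lemma diffusion_path_even (k i : nat) :
  diffusion path_nbrs c0_path (2 * k) i = even_word k i.
Proof.
  revert i; induction k as [| k IH]; intros i.
  - now destruct i.
  - replace (2 * S k)%nat with (S (S (2 * k))) by lia. cbn [diffusion].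
    rewrite <- diffusion_step_odd_word. apply diffusion_step_ext. intros x.
    rewrite <- diffusion_step_even_word. now apply diffusion_step_ext.
Qed.

Theorem lemma15 : forall k i : nat,
  diffusion path_nbrs c0_path (2 * k) i = even_word k i /\
  diffusion path_nbrs c0_path (2 * k + 1) i = odd_word k i.
Proof.
  intros k i. split; [apply diffusion_path_even |].
  rewrite Nat.add_1_r. cbn [diffusion].
  rewrite <- diffusion_step_even_word. apply diffusion_step_ext, diffusion_path_even.
Qed.
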